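(* For $n\ge 4$, the dom-bondage number of the path $P_n$ is $B_{dom}(P_n)=2$ if $n\equiv 2\pmod 4$, and $B_{dom}(P_n)=1$ otherwise.
   Context: A dominated coloring of a graph is a proper coloring in which every color class is dominated by at least one vertex, i.e. for each color class $C$ there is a vertex adjacent to every vertex of $C$; $\chi_{dom}(G)$ is the minimum number of colors in a dominated coloring. The dom-bondage number $B_{dom}(G)$ is the minimum number of edges of $G$ whose removal changes the dominated chromatic number of $G$. *)

From mathcomp Require Import all_boot.
Set Implicit Arguments. Unset Strict Implicit. Unset Printing Implicit Defensive.

(* A simple graph on a finite vertex type T is given by its adjacency
   relation [adj : rel T] (assumed symmetric and irreflexive). *)

Section DomColoring.
Variable T : finType.

Definition edges (adj : rel T) : {set {set T}} :=
  [set e : {set T} | [exists x, exists y, adj x y && (e == [set x; y])]].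

Definition remove_edges (adj : rel T) (F : {set {set T}}) : rel T :=
  fun x y => adj x y && ([set x; y] \notin F).

Definition no_isolated (adj : rel T) : bool := [forall x, exists y, adj x y].

Definition proper_col (adj : rel T) n (c : {ffun T -> 'I_n}) : bool :=
  [forall x, forall y, adj x y ==> (c x != c y)].

Definition classes_dominated (adj : rel T) n (c : {ffun T -> 'I_n}) : bool :=
  [forall i : 'I_n, [exists x, c x == i] ==>
     [exists v, forall x, (c x == i) ==> adj v x]].

Definition dom_coloring (adj : rel T) n (c : {ffun T -> 'I_n}) : bool :=
  proper_col adj c && classes_dominated adj c.

Definition ncolors n (c : {ffun T -> 'I_n}) : nat := #|[set c x | x : T]|.

(* Colours are taken in 'I_#|T| w.l.o.g. (a colouring never uses
   more than #|T| colours).  Meaningful when a dominated colouring exists,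
   i.e. when the graph has no isolated vertex. *)
Definition chi_dom (adj : rel T) : nat :=
  \big[minn/#|T|]_(c : {ffun T -> 'I_#|T|} | dom_coloring adj c) ncolors c.

(* edge sets whose removal changes chi_dom (keeping chi_dom defined) *)
Definition dom_bondage_set (adj : rel T) (F : {set {set T}}) : Prop :=
  [/\ F \subset edges adj, no_isolated (remove_edges adj F)
    & chi_dom (remove_edges adj F) <> chi_dom adj].

Definition is_dom_bondage (adj : rel T) (b : nat) : Prop :=
  (exists F, dom_bondage_set adj F /\ #|F| = b) /\
  (forall F, dom_bondage_set adj F -> b <= #|F|).

End DomColoring.

Definition path_adj (n : nat) : rel 'I_n :=
  fun i j => (i.+1 == j :> nat) || (j.+1 == i :> nat).
Arguments path_adj n : clear implicits.

From mathcomp Require Import all_boot zify.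
Set Implicit Arguments. Unset Strict Implicit. Unset Printing Implicit Defensive.

(* In a dominated colouring of a spanning subgraph H of P_n every colour class
   has a common neighbour, so it is a single vertex or a pair {v-1, v+1} whose
   middle vertex v keeps both its edges in H.  The upper vertices of such pairs
   are never at distance 2 (three vertices would share a colour), so among L
   consecutive vertices at most g(L) = 2 (L div 4) + min (L mod 4, 2) are upper
   vertices; hence chi_dom(H) >= n - g(n - s) when no pair has its upper vertex
   below s.  For s = 2 this is chi_dom(P_n) >= g(n), attained by the colouring
   0,1,0,1,2,3,2,3,...
   Colouring the two paths left by deleting one edge separately uses
   g(a) + g(n - a) colours, at most g(n) when n = 2 mod 4: then no single edge
   is a dom-bondage set.  Deleting {1,2} forbids pairs with upper vertex 2 or 3,
   so chi_dom >= n - g(n - 4) > g(n) unless n = 2 mod 4; deleting {3,4} as well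
   gives n - g(n - 6) = g(n) + 2. *)

Lemma geq_bigminn_seq (I : eqType) (r : seq I) (P : pred I) (F : I -> nat) x0 i0 :
  i0 \in r -> P i0 -> \big[minn/x0]_(i <- r | P i) F i <= F i0.
Proof.
elim: r => // a r IH; rewrite inE big_cons => /orP [/eqP <- ->|r_i0 P_i0].
  exact: geq_minl.
case: (P a); last exact: IH.
exact: leq_trans (geq_minr _ _) (IH r_i0 P_i0).
Qed.

Section ChiDom.
Variable T : finType.

Lemma chi_dom_le_ncolors (adj : rel T) (c : {ffun T -> 'I_#|T|}) :
  dom_coloring adj c -> chi_dom adj <= ncolors c.
Proof. by move=> c_dom; apply: geq_bigminn_seq; rewrite ?mem_index_enum. Qed.

Lemma chi_dom_ge (adj : rel T) b : b <= #|T| ->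
  (forall c : {ffun T -> 'I_#|T|}, dom_coloring adj c -> b <= ncolors c) ->
  b <= chi_dom adj.
Proof.
move=> b_le b_ncol; apply: (big_ind (fun x => b <= x)) => // x y b_x b_y.
by rewrite leq_min b_x.
Qed.

Lemma eq_chi_dom (adj1 adj2 : rel T) : adj1 =2 adj2 -> chi_dom adj1 = chi_dom adj2.
Proof.
move=> eq_adj; apply: eq_bigl => c; congr (_ && _).
  by apply: eq_forallb => x; apply: eq_forallb => y; rewrite eq_adj.
apply: eq_forallb => i; congr (_ ==> _); apply: eq_existsb => v.
by apply: eq_forallb => x; rewrite eq_adj.
Qed.

Lemma card_le_ncolors m (c : {ffun T -> 'I_m}) (A : {set T}) :
  {in A &, injective c} -> #|A| <= ncolors c.
Proof.
move=> c_inj; rewrite -(card_in_imset c_inj); apply: subset_leq_card.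
by apply/subsetP => _ /imsetP [x _ ->]; apply: imset_f.
Qed.

Lemma ncolors_widen k m (le_km : k <= m) (f : T -> 'I_k) :
  ncolors [ffun x => widen_ord le_km (f x)] <= k.
Proof.
rewrite -[k in _ <= k]card_ord -cardsT.
apply: leq_trans (leq_imset_card (widen_ord le_km) _); apply: subset_leq_card.
by apply/subsetP => _ /imsetP [x _ ->]; rewrite ffunE imset_f ?inE.
Qed.

Lemma dom_bondage_set_gt0 (adj : rel T) F : dom_bondage_set adj F -> 0 < #|F|.
Proof.
case=> _ _ chi_ne; rewrite card_gt0; apply/negP => /eqP F0; apply: chi_ne.
by apply: eq_chi_dom => u v; rewrite /remove_edges F0 inE andbT.
Qed.

End ChiDom.

Lemma card_ord_count n (p : pred nat) : #|[set i : 'I_n | p i]| = count p (iota 0 n).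
Proof.
rewrite -val_enum_ord count_map cardE /enum_mem size_filter /enum_mem count_filter.
by apply: eq_count => x; rewrite /= inE andbT.
Qed.

Definition path_chi_dom (L : nat) : nat := 2 * (L %/ 4) + minn (L %% 4) 2.

Lemma path_chi_dom_sub2 n : 2 <= n -> n - path_chi_dom (n - 2) = path_chi_dom n.
Proof. rewrite /path_chi_dom; lia. Qed.

Lemma path_chi_dom_cut_le n a :
  n %% 4 = 2 -> a <= n -> path_chi_dom a + path_chi_dom (n - a) <= path_chi_dom n.
Proof. rewrite /path_chi_dom; lia. Qed.

Lemma path_chi_dom_lt_remove_odd n : 4 <= n ->
  path_chi_dom n < n - path_chi_dom (n - (if n %% 4 == 2 then 2 else 1).*2.+2).
Proof. rewrite /path_chi_dom; case: ifP; lia. Qed.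

Lemma count_gap2_le (p : pred nat) : (forall x, p x -> ~~ p x.+2) ->
  forall s L, count p (iota s L) <= path_chi_dom L.
Proof.
move=> p_gap2 s L.
have pair x : p x + p x.+2 <= 1.
  by case px: (p x); [rewrite (negbTE (p_gap2 x px)) | exact: leq_b1].
elim/ltn_ind: L s => L IH s; rewrite /path_chi_dom.
have [L_small|L_big] := ltnP L 4.
  have := pair s; case: L {IH} L_small => [|[|[|[|]]]] //= _; lia.
have [M -> IH_M] : exists2 M, L = 4 + M & count p (iota (s + 4) M) <= path_chi_dom M.
  by exists (L - 4); [lia | apply: IH; lia].
have := pair s; have := pair s.+1; move: IH_M.
rewrite iotaD count_cat /= /path_chi_dom; lia.
Qed.

(* Colour classes {4k, 4k+2} and {4k+1, 4k+3}, dominated by 4k+1 and 4k+2. *)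
Definition path_color (x : nat) : nat := 2 * (x %/ 4) + x %% 2.

Definition path_dominator (L x : nat) : nat :=
  if (x %% 4 < 2) && (x.+1 < L) then x.+1 else x.-1.

Definition cut_color (a x : nat) : nat :=
  if x < a then path_color x else path_chi_dom a + path_color (x - a).

Definition cut_dominator (n a x : nat) : nat :=
  if x < a then path_dominator a x else a + path_dominator (n - a) (x - a).

Lemma cut_color_lt n a x :
  a <= n -> x < n -> cut_color a x < path_chi_dom a + path_chi_dom (n - a).
Proof. by rewrite /cut_color /path_color /path_chi_dom; case: ifP; lia. Qed.

Lemma cut_color_adj a x : cut_color a x != cut_color a x.+1.
Proof.
rewrite /cut_color /path_color /path_chi_dom.
by case: (ltnP x a) => ?; case: (ltnP x.+1 a) => ?; lia.
Qed.

Lemma cut_dominator_lt n a x :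
  a <= n -> a != 1 -> a.+1 != n -> x < n -> cut_dominator n a x < n.
Proof.
rewrite /cut_dominator /path_dominator.
by case: (ltnP x a) => ?; case: ifP; lia.
Qed.

Lemma cut_dominator_adj n a x y : a <= n -> a != 1 -> a.+1 != n -> x < n -> y < n ->
  cut_color a y = cut_color a x ->
  let v := cut_dominator n a x in
  ((v.+1 == y) || (y.+1 == v)) && ((v < a) == (y < a)).
Proof.
rewrite /cut_dominator /path_dominator /cut_color /path_color /path_chi_dom /=.
by case: (ltnP x a) => ?; case: (ltnP y a) => ?; case: ifP; lia.
Qed.

Section PathSubgraph.
Variables (n : nat) (H : rel 'I_n).
Hypothesis H_sub : subrel H (path_adj n).

Definition two_neighbours_from s :=
  forall v u w : 'I_n, H v u -> H v w -> u < w -> s <= w.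

Section DominatedColoring.
Variables (m : nat) (c : {ffun 'I_n -> 'I_m}).
Hypothesis c_dom : dom_coloring H c.

Lemma dom_class_common_neighbour u w : c u = c w -> exists v, H v u /\ H v w.
Proof.
case/andP: c_dom => _ /forallP /(_ (c u)) /implyP dom_cu cuw.
have [|v /forallP dom_v] := existsP (dom_cu _); first by apply/existsP; exists u.
by exists v; split; apply: (implyP (dom_v _)); rewrite ?cuw.
Qed.

Lemma dom_class_pair u w : c u = c w -> u < w -> w = u.+2 :> nat.
Proof.
move=> /dom_class_common_neighbour [v [/H_sub vu /H_sub vw]] lt_uw.
by move: vu vw; rewrite /path_adj; lia.
Qed.

Definition pair_top (x : nat) : bool :=
  [exists u : 'I_n, exists w : 'I_n, [&& u.+2 == x, w == x :> nat & c u == c w]].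

Lemma pair_top_gap2 x : pair_top x -> ~~ pair_top x.+2.
Proof.
case/existsP => u /existsP [w /and3P [/eqP ux /eqP wx /eqP cuw]].
apply/negP => /existsP [u' /existsP [w' /and3P [/eqP ux' /eqP wx' /eqP cuw']]].
have u'w : u' = w by apply: ord_inj; lia.
have cuw'' : c u = c w' by rewrite cuw -u'w.
by have := dom_class_pair cuw''; lia.
Qed.

Lemma injective_off_pair_tops : {in ~: [set w : 'I_n | pair_top w] &, injective c}.
Proof.
suff lt_inj (u w : 'I_n) : ~~ pair_top w -> c u = c w -> u < w -> False.
  move=> u w; rewrite !inE => top_u top_w cuw.
  case: (ltngtP u w) => [lt_uw | lt_wu | /ord_inj //].
    by case: (lt_inj u w top_w cuw lt_uw).
  by case: (lt_inj w u top_u (esym cuw) lt_wu).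
move=> /negP top_w cuw /(dom_class_pair cuw) wu; apply: top_w.
by apply/existsP; exists u; apply/existsP; exists w; rewrite wu cuw !eqxx.
Qed.

Lemma ncolors_ge s :
  s <= n -> two_neighbours_from s -> n - path_chi_dom (n - s) <= ncolors c.
Proof.
move=> le_sn nbrs_s.
have low_not_top x : x < s -> ~~ pair_top x.
  apply: contraTN => /existsP [u /existsP [w /and3P [/eqP ux /eqP wx /eqP cuw]]].
  have [v [vu vw]] := dom_class_common_neighbour cuw.
  by rewrite -leqNgt -wx; apply: nbrs_s vu vw _; lia.
have tops_le : #|[set w : 'I_n | pair_top w]| <= path_chi_dom (n - s).
  rewrite card_ord_count -(subnKC le_sn) iotaD count_cat.
  rewrite (eq_in_count (a2 := pred0)) ?count_pred0 => [|x]; last first.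
    by rewrite mem_iota => /andP [_ lt_xs]; apply/negbTE/low_not_top.
  by rewrite add0n addKn; apply: (count_gap2_le pair_top_gap2).
have := card_le_ncolors injective_off_pair_tops.
have := cardsC [set w : 'I_n | pair_top w]; rewrite card_ord; lia.
Qed.

End DominatedColoring.

Lemma chi_dom_ge_sub s : s <= n -> two_neighbours_from s ->
  n - path_chi_dom (n - s) <= chi_dom H.
Proof.
move=> le_sn nbrs_s; apply: chi_dom_ge => [|c c_dom]; first by rewrite card_ord leq_subr.
exact: ncolors_ge.
Qed.

Lemma path_chi_dom_le_chi_dom : 2 <= n -> path_chi_dom n <= chi_dom H.
Proof.
move=> n_ge2; rewrite -path_chi_dom_sub2 //; apply: chi_dom_ge_sub => //.
by move=> v u w /H_sub vu /H_sub vw lt_uw; move: vu vw; rewrite /path_adj; lia.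
Qed.

Lemma chi_dom_le_cut a : a <= n -> a != 1 -> a.+1 != n ->
  (forall u v : 'I_n, path_adj n u v -> (u < a) = (v < a) -> H u v) ->
  chi_dom H <= path_chi_dom a + path_chi_dom (n - a).
Proof.
move=> le_an a_ne1 aS_ne_n H_sup.
have le_k : path_chi_dom a + path_chi_dom (n - a) <= #|'I_n|.
  by rewrite card_ord /path_chi_dom; lia.
pose c := [ffun x : 'I_n => widen_ord le_k (Ordinal (cut_color_lt le_an (ltn_ord x)))].
have cE x y : (c x == c y) = (cut_color a x == cut_color a y) by rewrite !ffunE.
apply: leq_trans (chi_dom_le_ncolors (c := c) _) (ncolors_widen _ _).
apply/andP; split.
  apply/forallP => x; apply/forallP => y; apply/implyP => /H_sub.
  rewrite cE /path_adj => /orP [] /eqP <-; first exact: cut_color_adj.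
by rewrite eq_sym cut_color_adj.
apply/forallP => i; apply/implyP => /existsP [x /eqP <-].
apply/existsP; exists (Ordinal (cut_dominator_lt le_an a_ne1 aS_ne_n (ltn_ord x))).
apply/forallP => y; rewrite cE; apply/implyP => /eqP cxy.
have /andP [adj_vy /eqP side_vy] :=
  cut_dominator_adj le_an a_ne1 aS_ne_n (ltn_ord x) (ltn_ord y) cxy.
exact: H_sup.
Qed.

End PathSubgraph.

Lemma chi_dom_path n : 2 <= n -> chi_dom (path_adj n) = path_chi_dom n.
Proof.
have path_sub : subrel (path_adj n) (path_adj n) by [].
move=> n_ge2; apply/eqP; rewrite eqn_leq path_chi_dom_le_chi_dom // andbT.
have := chi_dom_le_cut path_sub (a := 0); rewrite subn0 add0n; apply => //; lia.
Qed.

Definition path_edge n (i : nat) : {set 'I_n} := [set j : 'I_n | i <= j <= i.+1].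

Lemma path_edgeE n (u v : 'I_n) i :
  path_adj n u v -> ([set u; v] == path_edge n i) = (minn u v == i).
Proof.
rewrite /path_adj => uv; apply/eqP/eqP => [e | <-].
  by have := set21 u v; have := set22 u v; rewrite e !inE; lia.
by apply/setP => j; rewrite !inE -!val_eqE /=; lia.
Qed.

Lemma path_edge_in_edges n i : i.+1 < n -> path_edge n i \in edges (path_adj n).
Proof.
move=> lt_in; rewrite inE; apply/existsP; exists (Ordinal (ltnW lt_in)).
apply/existsP; exists (Ordinal lt_in).
have adj : path_adj n (Ordinal (ltnW lt_in)) (Ordinal lt_in) by rewrite /path_adj /= eqxx.
by rewrite adj eq_sym path_edgeE //=; apply/eqP; lia.
Qed.

Lemma path_edge_inj n i j : i.+1 < n -> path_edge n i = path_edge n j -> i = j.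
Proof.
move=> lt_in e.
have mem k (lt_kn : k < n) : (Ordinal lt_kn \in path_edge n j) = (j <= k <= j.+1) by rewrite inE.
by have := mem _ (ltnW lt_in); have := mem _ lt_in; rewrite -e !inE /=; lia.
Qed.

Definition odd_edges n k : {set {set 'I_n}} := [set path_edge n i.*2.+1 | i : 'I_k].

Lemma card_odd_edges n k : k.*2 < n -> #|odd_edges n k| = k.
Proof.
move=> lt_kn; rewrite card_imset ?card_ord // => i j /path_edge_inj e.
by apply: ord_inj; have := e _; have := ltn_ord i; lia.
Qed.

Lemma odd_edges_sub n k : k.*2 < n -> odd_edges n k \subset edges (path_adj n).
Proof.
move=> lt_kn; apply/subsetP => _ /imsetP [i _ ->]; apply: path_edge_in_edges.
by have := ltn_ord i; lia.
Qed.

Lemma remove_odd_edgesE n k (u v : 'I_n) :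
  remove_edges (path_adj n) (odd_edges n k) u v =
  path_adj n u v && ~~ (odd (minn u v) && (minn u v < k.*2)).
Proof.
rewrite /remove_edges; case uv: (path_adj n u v) => //=; congr negb.
apply/imsetP/andP => [[i _ /eqP] | [odd_m lt_m]].
  by rewrite path_edgeE // => /eqP ->; have := ltn_ord i; lia.
have lt_half : (minn u v)./2 < k by lia.
by exists (Ordinal lt_half) => //; apply/eqP; rewrite path_edgeE //=; apply/eqP; lia.
Qed.

Lemma no_isolated_remove_odd_edges n k :
  k.*2.+1 < n -> no_isolated (remove_edges (path_adj n) (odd_edges n k)).
Proof.
move=> lt_kn; apply/forallP => z; apply/existsP.
have lt_nbr : (if odd z || (k.*2 < z) then z.-1 else z.+1) < n.
  by have := ltn_ord z; case: ifP; lia.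
by exists (Ordinal lt_nbr); rewrite remove_odd_edgesE /path_adj /=; case: ifP; lia.
Qed.

Lemma two_neighbours_remove_odd_edges n k :
  two_neighbours_from (remove_edges (path_adj n) (odd_edges n k)) k.*2.+2.
Proof. by move=> v u w; rewrite !remove_odd_edgesE /path_adj; lia. Qed.

Lemma dom_bondage_set_odd_edges n : 4 <= n ->
  dom_bondage_set (path_adj n) (odd_edges n (if n %% 4 == 2 then 2 else 1)).
Proof.
move=> n_ge4; have := path_chi_dom_lt_remove_odd n_ge4; set k := if _ then _ else _ => chi_lt.
have lt_kn : k.*2.+1 < n by rewrite /k; case: ifP; lia.
split; [exact: odd_edges_sub (ltnW lt_kn) | exact: no_isolated_remove_odd_edges |].
have H_sub : subrel (remove_edges (path_adj n) (odd_edges n k)) (path_adj n).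
  by move=> u v /andP [].
have := chi_dom_ge_sub H_sub lt_kn (@two_neighbours_remove_odd_edges n k).
by rewrite chi_dom_path; lia.
Qed.

Lemma chi_dom_remove_path_edge n i : n %% 4 = 2 -> i.+1 < n ->
  no_isolated (remove_edges (path_adj n) [set path_edge n i]) ->
  chi_dom (remove_edges (path_adj n) [set path_edge n i]) = chi_dom (path_adj n).
Proof.
move=> n_mod lt_in; set H := remove_edges _ _ => /forallP iso.
have HE u v : H u v = path_adj n u v && (minn u v != i).
  by rewrite /H /remove_edges in_set1; case uv: (path_adj n u v); rewrite // path_edgeE.
have H_sub : subrel H (path_adj n) by move=> u v; rewrite HE => /andP [].
have i_gt0 : 0 < i.
  by have /existsP [w] := iso (Ordinal (ltnW lt_in)); rewrite HE /path_adj /=; lia.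
have lt_i2n : i.+2 < n.
  by have /existsP [w] := iso (Ordinal lt_in); rewrite HE /path_adj /=; have := ltn_ord w; lia.
rewrite chi_dom_path; last by lia.
apply/eqP; rewrite eqn_leq path_chi_dom_le_chi_dom ?andbT //; last by lia.
apply: leq_trans (chi_dom_le_cut H_sub (a := i.+1) _ _ _ _) (path_chi_dom_cut_le n_mod _);
  try lia.
by move=> u v uv; rewrite HE uv /=; move: uv; rewrite /path_adj; lia.
Qed.

Lemma dom_bondage_set_path_gt1 n F :
  n %% 4 = 2 -> dom_bondage_set (path_adj n) F -> 1 < #|F|.
Proof.
move=> n_mod bond; rewrite ltnNge; apply/negP => F_le1.
have /cards1P [e F_e] : #|F| == 1 by rewrite eqn_leq F_le1 (dom_bondage_set_gt0 bond).
case: bond; rewrite F_e sub1set inE => /existsP [x /existsP [y /andP [xy /eqP ->]]].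
have /eqP -> : [set x; y] == path_edge n (minn x y) by rewrite path_edgeE.
move=> iso; apply; apply: chi_dom_remove_path_edge => //.
by move: xy; rewrite /path_adj; have := ltn_ord x; have := ltn_ord y; lia.
Qed.

Theorem mainTheorem13 (n : nat) (hn : 4 <= n) :
  is_dom_bondage (path_adj n) (if n %% 4 == 2 then 2 else 1).
Proof.
split.
  exists (odd_edges n (if n %% 4 == 2 then 2 else 1)).
  split; first exact: dom_bondage_set_odd_edges.
  by rewrite card_odd_edges //; case: ifP; lia.
move=> F bond; case: ifP => [/eqP n_mod | _].
  exact: dom_bondage_set_path_gt1 bond.
exact: dom_bondage_set_gt0 bond.
Qed.
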